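(* Let $G=(V,E)$ be a finite graph and let $U$ be a random subset of $V$ obtained by including each vertex of $V$ independently with probability $1/2$. Then for any pair of distinct vertices $x,y\in V$, \[\mathbb{P}\big(\deg_{U}(x)=\deg_{U}(y)\big)<\frac{20}{\sqrt{\delta(x,y)+1}}.\]
   Context: All graphs are finite and simple. For a vertex $x$, $\Gamma(x)$ denotes its neighbourhood, and for $U\subset V$, $\deg_U(x)=|\Gamma(x)\cap U|$ (defined for every $x\in V$, whether or not $x\in U$). The neighbourhood-distance between two vertices $x,y$ is $\delta(x,y)=|(\Gamma(x)\setminus \{y\})\,\triangle\, (\Gamma(y)\setminus\{x\})|$, where $\triangle$ is symmetric difference. *)

From HB Require Import structures.
From mathcomp Require Import all_boot all_order all_algebra.
Set Implicit Arguments. Unset Strict Implicit. Unset Printing Implicit Defensive.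
Import Order.TTheory GRing.Theory Num.Theory.

(* A finite simple graph: vertex type T : finType, adjacency e : rel T,
   assumed symmetric and irreflexive in the theorem. *)
Section Defs.
Variables (T : finType) (e : rel T).

Definition nbhd (x : T) : {set T} := [set y | e x y].

Definition degU (U : {set T}) (x : T) : nat := #|nbhd x :&: U|.

Definition ndist (x y : T) : nat :=
  let A := nbhd x :\ y in
  let B := nbhd y :\ x in
  #|(A :\: B) :|: (B :\: A)|.

(* Probability of event P when U is a random subset of T containing each
   vertex independently with probability 1/2, i.e. U uniform on {set T}. *)
Definition prob_half (R : fieldType) (P : pred {set T}) : R :=
  (#|[set U : {set T} | P U]|%:R / (2%:R ^+ #|T|))%R.
End Defs.

(* Let A and B be the private neighbourhoods of x and y (x and y themselves
   excluded).  Then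
     deg_U(x) - deg_U(y) = |U ∩ A| - |U ∩ B| + [xy ∈ E] (1_U(y) - 1_U(x)).
   Complementing U on B, and also on x when xy is an edge, is a
   measure-preserving involution which turns every negative term into a
   positive one: the event deg_U(x) = deg_U(y) becomes |U ∩ S| = |B| + [xy ∈ E]
   for a set S ⊇ A ∪ B, and |A ∪ B| = δ(x,y).  Such an event has probability
   C(n, k) / 2^n with n = |S|, and
     C(n, k)^2 (n + 1) <= C(n, ⌊n/2⌋)^2 (n + 1) <= 4^n. *)

From HB Require Import structures.
From mathcomp Require Import all_boot all_order all_algebra.
From mathcomp Require Import zify.
Set Implicit Arguments. Unset Strict Implicit. Unset Printing Implicit Defensive.

Lemma bin_central_odd m : 'C(m.*2.+1, m.+1) = 'C(m.*2.+1, m).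
Proof. by rewrite -[in RHS]bin_sub; [congr binomial; lia | lia]. Qed.

Lemma mul_bin_central m : m.+1 * 'C(m.*2.+1, m) = m.*2.+1 * 'C(m.*2, m).
Proof. by rewrite -bin_central_odd -mul_bin_diag. Qed.

Lemma bin_centralS m : 'C((m.+1).*2, m.+1) = 2 * 'C(m.*2.+1, m).
Proof. by rewrite doubleS binS bin_central_odd mul2n addnn. Qed.

Lemma bin_central_sqr_le m : 'C(m.*2, m) ^ 2 * m.*2.+1 <= 4 ^ m.*2.
Proof.
elim: m => // m IH; have rec := mul_bin_central m.
set c := 'C(m.*2, m) in IH rec; set b := 'C(m.*2.+1, m) in rec.
rewrite bin_centralS -(@leq_pmul2r (m.+1 ^ 2)) ?expn_gt0 //.
have -> : (2 * b) ^ 2 * (m.+1).*2.+1 * m.+1 ^ 2 = 4 * (m.+1 * b) ^ 2 * m.*2.+3 by lia.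
have -> : 4 ^ (m.+1).*2 * m.+1 ^ 2 = 4 ^ m.*2 * (16 * m.+1 ^ 2).
  by rewrite doubleS !expnS; lia.
rewrite rec.
have -> : 4 * (m.*2.+1 * c) ^ 2 * m.*2.+3 = c ^ 2 * m.*2.+1 * (4 * m.*2.+1 * m.*2.+3).
  by lia.
(* (2m + 1)(2m + 3) <= 4(m + 1)^2 is what keeps the induction going. *)
by apply: leq_mul => //; lia.
Qed.

Lemma bin_central_odd_sqr_le m : 'C(m.*2.+1, m) ^ 2 * m.*2.+2 <= 4 ^ m.*2.+1.
Proof.
rewrite -(@leq_pmul2l 4) // -expnS -doubleS; apply: leq_trans (bin_central_sqr_le m.+1).
by rewrite bin_centralS expnMn mulnA leq_mul2l ltnW ?orbT.
Qed.

Lemma bin_half_sqr_le n : 'C(n, n./2) ^ 2 * n.+1 <= 4 ^ n.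
Proof.
rewrite -(odd_double_half n) half_bit_double.
case: (odd n); last exact: bin_central_sqr_le.
by rewrite add1n; apply: bin_central_odd_sqr_le.
Qed.

Lemma bin_le_half n k : 'C(n, k) <= 'C(n, n./2).
Proof.
have n_halves := odd_double_half n.
suff mono : {in [pred i | i <= n./2] &, {homo binomial n : i j / i <= j}}.
  have [le_kh | lt_hk] := leqP k n./2; first by apply: mono; rewrite ?inE.
  have [le_kn | lt_nk] := leqP k n; last by rewrite bin_small.
  by rewrite -bin_sub //; apply: mono; rewrite ?inE //; lia.
apply: homo_leq_in => [|||i _]; [exact: leqnn | exact: leq_trans | |].
  by move=> i j _ le_jh l /andP[_ /ltnW le_lj]; rewrite inE (leq_trans le_lj).
rewrite inE => lt_ih; rewrite -(@leq_pmul2l i.+1) // mul_bin_left leq_mul2r.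
by rewrite (_ : i.+1 <= n - i) ?orbT //; lia.
Qed.

Lemma bin_sqr_le n k : 'C(n, k) ^ 2 * n.+1 <= 4 ^ n.
Proof.
apply: leq_trans (bin_half_sqr_le n).
by rewrite leq_mul2r leq_exp2r ?bin_le_half ?orbT.
Qed.

Lemma setU_split (T : finType) (S P Q : {set T}) :
  P \subset S -> Q \subset ~: S -> (P :|: Q) :&: S = P /\ (P :|: Q) :\: S = Q.
Proof.
rewrite -disjoints_subset => sPS dQS; split.
  by rewrite setIUl (setIidPl sPS) disjoint_setI0 ?setU0.
by rewrite setDUl (setDidPl dQS) (eqP (_ : P :\: S == set0)) ?set0U // setD_eq0.
Qed.

Lemma card_slice (T : finType) (S : {set T}) k :
  #|[set W : {set T} | #|W :&: S| == k]| = 'C(#|S|, k) * 2 ^ #|~: S|.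
Proof.
pose split W := (W :&: S, W :\: S).
pose R := setX [set P : {set T} | P \subset S & #|P| == k] (powerset (~: S)).
have -> : [set W | #|W :&: S| == k] = split @^-1: R.
  by apply/setP => W; rewrite !inE /= subsetIr subsetDr andbT.
rewrite on_card_preimset ?cardsX ?cards_draws ?card_powerset //.
exists (fun p => p.1 :|: p.2) => [W _ | [P Q]]; first exact: setID.
rewrite !inE => /andP[/andP[sPS _] sQS].
by rewrite /split; have [-> ->] := setU_split sPS sQS.
Qed.

Lemma card_slice_sqr_le (T : finType) (S : {set T}) k :
  #|[set W : {set T} | #|W :&: S| == k]| ^ 2 * #|S|.+1 <= 4 ^ #|T|.
Proof.
have pow4 m : (2 ^ m) ^ 2 = 4 ^ m by rewrite -expnM mulnC expnM.
rewrite card_slice expnMn pow4 mulnAC -(cardsC S) expnD.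
exact: leq_mul (bin_sqr_le _ _) (leqnn _).
Qed.

Lemma card_sum_mem (T : finType) (A : {set T}) : #|A| = \sum_z (z \in A).
Proof. by rewrite -sum1_card big_mkcond; apply: eq_bigr => z _; case: (z \in A). Qed.

Definition symdiff (T : finType) (D U : {set T}) := (U :\: D) :|: (D :\: U).

Lemma symdiffK (T : finType) (D : {set T}) : involutive (symdiff D).
Proof. by move=> U; apply/setP => z; rewrite !inE; case: (z \in U); case: (z \in D). Qed.

Section DegreeBalance.
Variables (T : finType) (e : rel T).
Hypotheses (e_sym : symmetric e) (e_irr : irreflexive e).
Variables (x y : T).
Hypothesis neq_xy : x != y.

Let A := nbhd e x :\: nbhd e y :\ y.
Let B := nbhd e y :\: nbhd e x :\ x.
Let Exy := if e x y then [set x; y] else set0.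
Let Ex := if e x y then [set x] else set0.
Let S := A :|: B :|: Exy.
Let D := B :|: Ex.

Lemma card_Ex : #|Ex| = e x y.
Proof. by rewrite /Ex; case: (e x y); rewrite ?cards1 ?cards0. Qed.

Lemma degU_symdiff U :
  degU e U y + #|symdiff D U :&: S| = degU e U x + #|B| + #|Ex|.
Proof.
rewrite /degU !card_sum_mem -!big_split /=; apply: eq_bigr => z _.
rewrite /symdiff /S /D /A /B /Exy /Ex /nbhd.
case exy: (e x y); rewrite !inE.
all: case: (eqVneq z x) => [->|zx].
all: try by rewrite e_irr (e_sym y x) exy ?eqxx ?(negbTE neq_xy); case: (x \in U).
all: case: (eqVneq z y) => [->|zy].
all: try by rewrite e_irr exy ?eqxx ?(negbTE neq_xy) ?(eq_sym y x); case: (y \in U).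
all: by case: (e x z); case: (e y z); case: (z \in U).
Qed.

Lemma ndist_le_card : ndist e x y <= #|S|.
Proof.
apply: leq_trans (subset_leq_card (subsetUl (A :|: B) Exy)).
apply/subset_leq_card/subsetP => z; rewrite /A /B /nbhd !inE.
case: (eqVneq z x) => [->|_]; first by rewrite e_irr /= !andbF.
case: (eqVneq z y) => [->|_]; first by rewrite e_irr /= !andbF.
by case: (e x z); case: (e y z).
Qed.

Lemma card_degU_eq :
  #|[set U | degU e U x == degU e U y]| = #|[set W | #|W :&: S| == #|B| + e x y]|.
Proof.
rewrite -[RHS](card_preimset _ (can_inj (symdiffK D))); apply: eq_card => U.
by rewrite !inE; have := degU_symdiff U; rewrite card_Ex => balance; apply/eqP/eqP; lia.
Qed.

Lemma card_degU_eq_sqr_le :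
  #|[set U | degU e U x == degU e U y]| ^ 2 * (ndist e x y).+1 <= 4 ^ #|T|.
Proof.
rewrite card_degU_eq; apply: leq_trans (card_slice_sqr_le S (#|B| + e x y)).
by rewrite leq_mul2l ltnS ndist_le_card orbT.
Qed.

End DegreeBalance.

Import Order.TTheory GRing.Theory Num.Theory.
Local Open Scope ring_scope.

Lemma ler_div_invsqrt (R : rcfType) (c q d : R) :
  0 <= c -> 0 < q -> 0 < d -> c ^+ 2 * d <= q ^+ 2 -> c / q <= (Num.sqrt d)^-1.
Proof.
move=> c_ge0 q_gt0 d_gt0 le_cdq.
rewrite ler_pdivrMr // ler_pdivlMl ?sqrtr_gt0 //.
rewrite -[c]ger0_norm // -sqrtr_sqr -(sqrtrM _ (ltW d_gt0)) mulrC.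
by rewrite -[q]gtr0_norm // -sqrtr_sqr ler_sqrt ?sqr_ge0.
Qed.

Theorem lemma3p1 (R : rcfType) (T : finType) (e : rel T)
  (e_sym : symmetric e) (e_irr : irreflexive e) (x y : T) (hxy : x != y) :
  prob_half R (fun U => degU e U x == degU e U y)
    < 20%:R / Num.sqrt ((ndist e x y).+1)%:R.
Proof.
have sqrt_gt0 : 0 < Num.sqrt ((ndist e x y).+1)%:R :> R by rewrite sqrtr_gt0 ltr0n.
apply: (le_lt_trans (y := (Num.sqrt (ndist e x y).+1%:R)^-1)).
  apply: ler_div_invsqrt; rewrite ?ler0n ?exprn_gt0 ?ltr0n //.
  by rewrite -exprM mulnC exprM -!natrX -natrM ler_nat card_degU_eq_sqr_le.
by rewrite -[X in X < _]mul1r ltr_pM2r ?invr_gt0 ?ltr1n.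
Qed.
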